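(* Let $p,q$ be positive integers with $\frac1p+\frac1q=\frac12$. Let $M$ be a $\{p,q\}$-map of radius $0$ (i.e., all vertices of $M$ are exterior) and perimeter $n>0$. Then $\mathrm{Area}(M)\le\frac{q(n-2)}{2p}$.
   Context: A map is a finite, connected, simply connected 2-complex embedded in the plane; $\mathrm{Area}$ = number of faces; perimeter = length of the boundary path; degree of a vertex = number of oriented edges starting there, degree of a face = length of its boundary path. A $(p,q)$-map: every interior face has degree $\ge p$, every interior vertex has degree $\ge q$. A $\{p,q\}$-map is a $(p,q)$-map in which every face has degree at least $p$ and less than $2p$ and every vertex has degree less than $2q$. The radius is the maximal distance from a vertex to the boundary. *)

From mathcomp Require Import all_boot all_order all_fingroup all_algebra.
Set Implicit Arguments.
Unset Strict Implicit.
Unset Printing Implicit Defensive.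
Import GRing.Theory Num.Theory.

(* A combinatorial map on a finite set of darts D (oriented edges):
   - [alpha] : fixed-point-free involution (reversal of an oriented edge);
   - [sigma] : rotation of the oriented edges starting at a common vertex;
   - face permutation [phi d = sigma (alpha d)] (MathComp: (s * t) x = t (s x)),
     so that phi d is the next oriented edge of the face boundary walk;
   vertices = sigma-orbits, edges = alpha-orbits, faces = phi-orbits
   (the latter including the exterior region). *)
Definition face_perm (D : finType) (alpha sigma : {perm D}) : {perm D} :=
  (alpha * sigma)%g.

Section Maps.
Variables (D : finType) (alpha sigma : {perm D}) (d0 : D).
Local Notation phi := (face_perm alpha sigma).

Definition map_connected : Prop :=
  forall x y : D, connect (fun a b => (b == alpha a) || (b == sigma a)) x y.

(* spherical (genus 0): V - E + F = 2, F counting the exterior face *)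
Definition map_planar : Prop :=
  #|porbits sigma| + #|porbits phi| = #|porbits alpha| + 2.

(* A map (finite connected simply connected plane 2-complex) with at least
   one edge, presented as a connected genus-0 combinatorial map together
   with a dart d0 on the exterior face (boundary path). *)
Definition is_map : Prop :=
  [/\ forall d, alpha d != d, forall d, alpha (alpha d) = d,
      map_connected & map_planar].

Definition outer : {set D} := porbit phi d0.

Definition perimeter : nat := #|outer|.

(* number of (interior) faces = 2-cells *)
Definition area : nat := #|porbits phi| - 1.

Definition vdeg (d : D) : nat := #|porbit sigma d|.
Definition fdeg (d : D) : nat := #|porbit phi d|.

Definition boundary_vertex (d : D) : bool :=
  [exists e in porbit sigma d, e \in outer].

Definition interior_face (d : D) : bool := d \notin outer.

Definition pq_map (p q : nat) : Prop :=
  (forall d, interior_face d -> p <= fdeg d) /\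
  (forall d, ~~ boundary_vertex d -> q <= vdeg d).

Definition braces_pq_map (p q : nat) : Prop :=
  [/\ pq_map p q,
      forall d, interior_face d -> p <= fdeg d < 2 * p
    & forall d, vdeg d < 2 * q].

Definition radius0 : Prop := forall d, boundary_vertex d.

End Maps.

From mathcomp Require Import all_boot all_order all_fingroup all_algebra.
From mathcomp Require Import zify ring lra.
Set Implicit Arguments. Unset Strict Implicit. Unset Printing Implicit Defensive.
Import GRing.Theory Num.Theory.

(* Proof: with V, E and F = Area + 1 the numbers of vertices, edges and faces,
   each edge carries two darts and every vertex of a radius-0 map owns a dart
   of the boundary walk, so 2E = #darts and V <= n.  Counting darts face by face
   gives n + p Area <= 2E, and Euler's formula V + F = E + 2 then yields
   (p - 2) Area <= n - 2.  Finally 1/p + 1/q = 1/2 means q (p - 2) = 2p. *)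

Section PermOrbits.
Variable T : finType.
Implicit Types (s : {perm T}) (S : {set T}).

Lemma porbits_partition s : partition (porbits s) [set: T].
Proof.
have actsT : [acts <[s]>%g, on [set: T] | 'P] by apply/actsP => x _ y; rewrite !inE.
have := orbit_partition actsT; rewrite -porbitE.
by congr partition; apply/setP => B; apply/imsetP/imsetP => -[x _ ->]; exists x.
Qed.

Lemma sum_card_porbits s : \sum_(B in porbits s) #|B| = #|T|.
Proof. by rewrite -(card_partition (porbits_partition s)) cardsT. Qed.

Lemma card_porbit_involution s x :
  (forall y, s (s y) = y) -> s x != x -> #|porbit s x| = 2.
Proof.
move=> sK sx_neq; suff -> : porbit s x = [set x; s x].
  by rewrite cards2 eq_sym sx_neq.
apply/setP => y; rewrite !inE; apply/idP/idP.
- case/porbitP => i ->; rewrite permX; elim: i => [|i IHi] /=; first by rewrite eqxx.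
  by case/orP: IHi => /eqP ->; rewrite ?sK eqxx ?orbT.
- by case/orP => /eqP ->; [apply: porbit_id | have := mem_porbit s 1 x; rewrite expg1].
Qed.

Lemma card_fpfree_involution s :
  (forall x, s x != x) -> (forall x, s (s x) = x) -> #|T| = 2 * #|porbits s|.
Proof.
move=> s_neq sK; rewrite -(sum_card_porbits s) mulnC -sum_nat_const.
by apply: eq_bigr => B /imsetP[x _ ->]; apply: card_porbit_involution.
Qed.

Lemma card_porbits_leq_hitting_set s S :
  (forall x, [exists y in porbit s x, y \in S]) -> #|porbits s| <= #|S|.
Proof.
move=> hitS; apply: leq_trans (leq_imset_card (porbit s) S).
apply/subset_leq_card/subsetP => B /imsetP[x _ ->].
have /existsP[y /andP[y_x yS]] := hitS x.
by apply/imsetP; exists y => //; apply/eqP; rewrite eq_sym eq_porbit_mem.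
Qed.

Lemma leq_card_porbit_min_porbits s x0 m :
  (forall x, x \notin porbit s x0 -> m <= #|porbit s x|) ->
  #|porbit s x0| + m * (#|porbits s| - 1) <= #|T|.
Proof.
move=> min_m; have O0 : porbit s x0 \in porbits s by apply: imset_f.
rewrite -(sum_card_porbits s) (big_setD1 _ O0) /= leq_add2l.
rewrite (cardsD1 (porbit s x0) (porbits s)) O0 addKn mulnC -sum_nat_const.
apply: leq_sum => B /setD1P[B_neq /imsetP[x _ eB]]; subst B; apply: min_m.
by apply: contra B_neq => x_x0; rewrite eq_porbit_mem.
Qed.

End PermOrbits.

Lemma radius0_area_perimeter (D : finType) (alpha sigma : {perm D}) (d0 : D) p :
  is_map alpha sigma -> radius0 alpha sigma d0 ->
  (forall d, interior_face alpha sigma d0 d -> p <= fdeg alpha sigma d) ->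
  p * area alpha sigma + 2 <= perimeter alpha sigma d0 + 2 * area alpha sigma.
Proof.
move=> [alpha_neq alphaK _ euler] rad0 fdeg_ge.
have darts_edges := card_fpfree_involution alpha_neq alphaK.
have vertices_le : #|porbits sigma| <= perimeter alpha sigma d0.
  exact: card_porbits_leq_hitting_set.
have darts_faces := leq_card_porbit_min_porbits fdeg_ge.
have faces_gt0 : 0 < #|porbits (face_perm alpha sigma)|.
  by apply/card_gt0P; exists (outer alpha sigma d0); apply: imset_f.
move: euler darts_faces vertices_le; rewrite /map_planar /area /perimeter /outer; lia.
Qed.

Lemma harmonic_half_nat p q : 0 < p -> 0 < q ->
  (1 / p%:Q + 1 / q%:Q = 1 / 2)%R -> p * q = 2 * p + 2 * q.
Proof.
move=> p_gt0 q_gt0 harm; apply/eqP; rewrite -(eqr_nat rat) natrD !natrM; apply/eqP.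
have p_neq0 : (p%:R != 0 :> rat)%R by rewrite pnatr_eq0 -lt0n.
have q_neq0 : (q%:R != 0 :> rat)%R by rewrite pnatr_eq0 -lt0n.
have -> : (2 * p%:R + 2 * q%:R = 2 * p%:R * q%:R * (1 / p%:R + 1 / q%:R) :> rat)%R.
  by field; rewrite p_neq0 q_neq0.
by rewrite harm; field.
Qed.

Theorem lemma2p11 (p q : nat) (D : finType) (alpha sigma : {perm D}) (d0 : D) :
  0 < p -> 0 < q ->
  ((1 / p%:Q) + (1 / q%:Q) = 1 / 2)%R ->
  is_map alpha sigma ->
  braces_pq_map alpha sigma d0 p q ->
  radius0 alpha sigma d0 ->
  0 < perimeter alpha sigma d0 ->
  ((area alpha sigma)%:Q <=
     q%:Q * ((perimeter alpha sigma d0)%:Q - 2) / (2 * p%:Q))%R.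
Proof.
move=> p_gt0 q_gt0 harm map_M [_ fdeg_range _] rad0 _.
have fdeg_ge d : interior_face alpha sigma d0 d -> p <= fdeg alpha sigma d.
  by move/fdeg_range/andP => [].
have pq := harmonic_half_nat p_gt0 q_gt0 harm.
have := radius0_area_perimeter map_M rad0 fdeg_ge.
set A := area _ _; set n := perimeter _ _ _ => area_le.
have : 2 * p * A + 2 * q <= q * n by have := leq_mul (leqnn q) area_le; nia.
rewrite -(ler_nat rat) !natrD !natrM -!pmulrn => area_le_Q.
rewrite ler_pdivlMr ?mulr_gt0 ?ltr0n //; lra.
Qed.
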